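(* For every uniformly coherent state $\Psi_k\in\mathcal U_k$, $C_{c,\mathrm{PIO}}(\Psi_k)\le\log k=C_f^{\mathcal U}(\Psi_k)$.
   Context: Fixed computational basis; logs base 2. $\mathcal U_k$ is the set of uniformly coherent states $|\Psi\rangle=k^{-1/2}\sum_{j\in J}e^{i\theta_j}|j\rangle$, $|J|=k$, $\theta_j\in\mathbb R$. $C_f^{\mathcal U}(\rho)=\inf\{\sum_\alpha p_\alpha\log k_\alpha:\rho=\sum_\alpha p_\alpha|\Psi_\alpha\rangle\langle\Psi_\alpha|,\ |\Psi_\alpha\rangle\in\mathcal U_{k_\alpha}\}$ ($+\infty$ if no decomposition exists). PIO: channels $X\mapsto\sum_{\alpha,\beta}p_\alpha U_{\alpha,\beta}\Pi_{\beta|\alpha}X\Pi_{\beta|\alpha}U_{\alpha,\beta}^\dagger$ with $p$ a probability distribution, $U_{\alpha,\beta}$ incoherent unitaries (permutation times diagonal unitary), and for each $\alpha$ incoherent projectors $\Pi_{\beta|\alpha}=\sum_{i\in I}|i\rangle\langle i|$ summing to the identity; different input/output dimensions are handled by identifying spaces with spans of subsets of basis vectors of a common space (appending incoherent states, relabelling basis vectors and discarding subsystems allowed). $\Psi_{2^m}=2^{-m/2}\sum_{i=1}^{2^m}|i\rangle$. $C_{c,\mathrm{PIO}}(\rho)=\inf\{r:\lim_n\inf_{\Lambda\in\mathrm{PIO}}\|\Lambda(\Psi_{2^{\lfloor rn\rfloor}})-\rho^{\otimes n}\|_1=0\}$. *)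

From HB Require Import structures.
From mathcomp Require Import all_boot all_order all_algebra all_fingroup.
From mathcomp Require Import complex mxtens.
From mathcomp Require Import all_classical all_reals all_analysis.

Set Implicit Arguments.
Unset Strict Implicit.
Unset Printing Implicit Defensive.

Import Order.TTheory GRing.Theory Num.Theory.
Import numFieldNormedType.Exports.
Local Open Scope ring_scope.
Local Open Scope classical_set_scope.

Section QCoh.
Variable R : realType.
Local Notation C := (R[i]).

Definition log2 (x : R) : R := ln x / ln 2.

Definition expi (t : R) : C := (cos t +i* sin t)%C.

Definition adj m n (A : 'M[C]_(m, n)) : 'M[C]_(n, m) := (map_mx Num.conj A)^T.

Definition ketbra d (psi : 'cV[C]_d) : 'M[C]_d := psi *m adj psi.

Definition unif_coh d (k : nat) (psi : 'cV[C]_d) : Prop :=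
  (0 < k)%N /\
  exists (J : {set 'I_d}) (theta : 'I_d -> R),
    #|J| = k /\
    forall j : 'I_d, psi j 0 =
      if j \in J then ((Num.sqrt (k%:R : R))^-1)%:C%C * expi (theta j) else 0.

Definition max_coh (M : nat) : 'cV[C]_M :=
  const_mx (((Num.sqrt (M%:R : R))^-1)%:C%C).

Fixpoint tpow d (rho : 'M[C]_d) (n : nat) : 'M[C]_(d ^ n) :=
  match n with
  | 0 => 1%:M
  | n'.+1 => castmx (esym (expnSr d n'), esym (expnSr d n')) (tensmx (tpow rho n') rho)
  end.

Definition unitary N (U : 'M[C]_N) : Prop := U *m adj U = 1%:M.

Definition trnorm N (X : 'M[C]_N) : R :=
  sup [set Normc.normc (\tr (U *m X)) | U in [set U : 'M[C]_N | unitary U]].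

Definition inc_proj N (I : {set 'I_N}) : 'M[C]_N := diag_mx (\row_i (i \in I)%:R).

Definition incoh_unitary N (U : 'M[C]_N) : Prop :=
  exists (s : 'S_N) (v : 'rV[C]_N),
    (forall i, v 0 i * Num.conj (v 0 i) = 1) /\ U = perm_mx s *m diag_mx v.

Definition pio_fixed N (Phi : 'M[C]_N -> 'M[C]_N) : Prop :=
  exists (A B : nat) (p : 'I_A -> R) (U : 'I_A -> 'I_B -> 'M[C]_N)
         (P : 'I_A -> 'I_B -> {set 'I_N}),
    (forall a, 0 <= p a) /\ \sum_a p a = 1 /\
    (forall a b, incoh_unitary (U a b)) /\
    (forall a, \sum_b inc_proj (P a b) = 1%:M) /\
    forall X, Phi X = \sum_a \sum_b (p a)%:C%C *:
        (U a b *m inc_proj (P a b) *m X *m inc_proj (P a b) *m adj (U a b)).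

(* identify 'M_a with the operators on the span of the first a basis vectors
   of an N-dimensional space (i.e. appending incoherent states) *)
Definition embed a N (X : 'M[C]_a) : 'M[C]_N :=
  \matrix_(i, j)
    match @insub _ (fun k => (k < a)%N) 'I_a (val i),
          @insub _ (fun k => (k < a)%N) 'I_a (val j) with
    | Some i', Some j' => X i' j'
    | _, _ => 0
    end.

Definition ptrace b e (Y : 'M[C]_(b * e)) : 'M[C]_b :=
  \matrix_(i, i') \sum_(j < e) Y (mxtens_index (i, j)) (mxtens_index (i', j)).

Definition PIO a b (Lam : 'M[C]_a -> 'M[C]_b) : Prop :=
  exists (e : nat) (Phi : 'M[C]_(b * e) -> 'M[C]_(b * e)),
    (a <= b * e)%N /\ pio_fixed Phi /\
    forall X, Lam X = ptrace (Phi (embed (b * e) X)).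

(* number of maximally coherent qubits floor(r n) used at blocklength n *)
Definition nbits (r : R) (n : nat) : nat := absz (Num.floor (r * n%:R)).

Definition dil_err d (rho : 'M[C]_d) (r : R) (n : nat) : R :=
  inf [set trnorm (Lam (ketbra (max_coh (2 ^ nbits r n)%N)) - tpow rho n)
      | Lam in [set Lam : 'M[C]_(2 ^ nbits r n) -> 'M[C]_(d ^ n) | PIO Lam]].

Definition C_c_PIO d (rho : 'M[C]_d) : \bar R :=
  ereal_inf [set r%:E | r in [set r : R | 0 <= r /\ dil_err rho r n @[n --> \oo] --> (0 : R)]].

Definition C_f_U d (rho : 'M[C]_d) : \bar R :=
  ereal_inf [set x : \bar R | (exists (L : nat) (p : 'I_L -> R) (ks : 'I_L -> nat)
                            (phi : 'I_L -> 'cV[C]_d),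
    (forall a, 0 <= p a) /\ \sum_a p a = 1 /\
    (forall a, unif_coh (ks a) (phi a)) /\
    rho = \sum_a (p a)%:C%C *: ketbra (phi a) /\
    x = (\sum_a p a * log2 (ks a)%:R)%:E)].

End QCoh.

(* Formation: if |psi><psi| = sum_a p_a |phi_a><phi_a| with p_a >= 0, every row
   vector annihilating psi annihilates each phi_a with p_a > 0, so phi_a is a
   multiple of psi and has the same support size k; every decomposition into
   uniformly coherent states therefore costs exactly log k.

   Dilution: psi^(x)n is a unit vector t with K = k^n entries of squared modulus
   1/K.  Embed Psi_M, M = 2^floor(rn), into C^D (x) C^(2M) and apply an
   incoherent unitary sending the source basis vector x < M, up to the phase of
   t, to |s_(x mod K)>|M + x/K>, where s enumerates the support of t.  Tracing
   out the second factor leaves (1 - m/M)|t><t| + (K/M)|u><u| with m = M mod K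
   and u the part of t on the first m support points, which is within 2K/M of
   |t><t| in trace norm.  For r > log k this bound decays geometrically. *)

From HB Require Import structures.
From mathcomp Require Import all_boot all_order all_algebra all_fingroup.
From mathcomp Require Import complex mxtens.
From mathcomp Require Import all_classical all_reals all_analysis.
From mathcomp Require Import zify ring lra.
Import Order.TTheory GRing.Theory Num.Theory.
Local Open Scope ring_scope.
Set Implicit Arguments. Unset Strict Implicit. Unset Printing Implicit Defensive.

Section SwapAlong.
Variables (T : Type) (P Q : pred T) (f g : T -> T).
Hypotheses (fQ : forall x, P x -> Q (f x)) (gP : forall y, Q y -> P (g y)).
Hypotheses (fK : forall x, P x -> g (f x) = x) (gK : forall y, Q y -> f (g y) = y).
Hypothesis PQ_disjoint : forall x, P x -> ~~ Q x.

Definition swap_along x := if P x then f x else if Q x then g x else x.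

Lemma swap_alongK : involutive swap_along.
Proof.
move=> x; rewrite /swap_along; case Px: (P x).
  have Qfx := fQ Px.
  have /negbTE -> : ~~ P (f x) by apply: contraL Qfx => /PQ_disjoint.
  by rewrite Qfx fK.
by case Qx: (Q x); rewrite ?gP ?gK // Px Qx.
Qed.

Lemma swap_along_closed (B : pred T) :
  (forall x, P x || Q x -> B x) -> forall x, B x -> B (swap_along x).
Proof.
move=> PQB x Bx; rewrite /swap_along.
case: ifP => Px; first by apply: PQB; rewrite fQ ?orbT.
by case: ifP => Qx //; apply: PQB; rewrite gP.
Qed.

End SwapAlong.

Section Counting.
Local Open Scope nat_scope.

Lemma sum_ord_ltn (M c : nat) : c <= M -> \sum_(b < M) (b < c) = c.
Proof.
move=> cM; rewrite -(big_mkord xpredT (fun b => nat_of_bool (b < c))).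
rewrite (big_cat_nat _ (n := c)) //= [X in _ + X]big1_seq ?addn0.
  by rewrite (eq_big_nat _ _ (F2 := fun => 1%N)) ?sum_nat_const_nat ?muln1 ?subn0
     // => b /andP [_ ->].
by move=> b /andP [_]; rewrite mem_index_iota => /andP [/leq_gtF ->].
Qed.

Lemma sum_mul_add_ltn (K M m : nat) : m < K ->
  \sum_(b < M) (b * K + m < M) = M %/ K + (m < M %% K).
Proof.
move=> mK; have MqKr := divn_eq M K; have rK : M %% K < K by rewrite ltn_mod; lia.
rewrite -(@sum_ord_ltn M (M %/ K + _)); last by case: (ltnP m (M %% K)); nia.
by apply: eq_bigr => b _; congr nat_of_bool; case: (ltnP m (M %% K)) => mr;
   apply/idP/idP; nia.
Qed.

End Counting.

Section Spreading.
Local Open Scope nat_scope.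
Variables (s : seq nat) (M : nat).
Hypotheses (s_uniq : uniq s) (s_gt0 : 0 < size s).
Local Notation K := (size s).
Local Notation E := (M + M).

(* [i * E + j] encodes the pair (i, j) as [mxtens_index] does.  The source
   [x < M] lies in row 0; it is sent to row [s_(x mod K)], column [M + x / K].
   Images live in columns [>= M], away from the sources, so swapping each source
   with its image is an involution. *)
Definition spread x := nth 0 s (x %% K) * E + (M + x %/ K).
Definition gather y := (y %% E - M) * K + index (y %/ E) s.
Definition spread_image y := [&& M <= y %% E, y %/ E \in s & gather y < M].
Definition spreading := swap_along (fun x => x < M) spread_image spread gather.

Let pairE i j : j < E -> (i * E + j) %/ E = i /\ (i * E + j) %% E = j.
Proof. by move=> jE; rewrite divnMDl ?divn_small ?addn0 ?modnMDl ?modn_small //; lia. Qed.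

Lemma gather_pair i b : b < M -> gather (i * E + (M + b)) = b * K + index i s.
Proof.
move=> bM; have /(pairE i) [] : M + b < E by lia.
by rewrite /gather => -> ->; rewrite addKn.
Qed.

Lemma gather_lt y : spread_image y -> gather y < M.
Proof. by case/and3P. Qed.

Lemma gather_spread x : x < M -> gather (spread x) = x.
Proof.
move=> xM; rewrite gather_pair ?index_uniq ?ltn_mod -?divn_eq //.
exact: leq_ltn_trans (leq_div _ _) xM.
Qed.

Lemma spread_imageP x : x < M -> spread_image (spread x).
Proof.
move=> xM; rewrite /spread_image gather_spread // xM andbT.
have xKM : x %/ K < M by exact: leq_ltn_trans (leq_div _ _) xM.
have /(pairE (nth 0 s (x %% K))) [-> ->] : M + x %/ K < E by lia.
by rewrite leq_addr mem_nth ?ltn_mod.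
Qed.

Lemma spread_gather y : spread_image y -> spread (gather y) = y.
Proof.
case/and3P=> My sy gyM; have ilt : index (y %/ E) s < K by rewrite index_mem.
rewrite /spread /gather modnMDl divnMDl // modn_small // (divn_small ilt) addn0.
by rewrite nth_index // subnKC // -divn_eq.
Qed.

Lemma spread_image_low i j : j < M -> spread_image (i * E + j) = false.
Proof.
move=> jM; have /(pairE i) [_ modE] : j < E by exact: ltn_addr.
by rewrite /spread_image modE leqNgt jM.
Qed.

Lemma small_spread_image x : x < M -> spread_image x = false.
Proof. by move/(spread_image_low 0); rewrite mul0n. Qed.

Lemma spreadingK : involutive spreading.
Proof.
apply: swap_alongK => [||||x /small_spread_image ->] //.
- exact: spread_imageP.
- exact: gather_lt.
- exact: gather_spread.
- exact: spread_gather.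
Qed.

Lemma spreading_lt D x : all (fun i => i < D) s -> x < D * E -> spreading x < D * E.
Proof.
move=> /allP sD.
apply: (swap_along_closed spread_imageP gather_lt (B := fun z => z < D * E)).
move=> y /orP [yM | /and3P [_ /sD yD gyM]].
  have D_gt0 : 0 < D by have := sD _ (mem_nth 0 s_gt0); lia.
  by rewrite (leq_trans yM) // (leq_trans (leq_addr M M)) // leq_pmull.
by rewrite -ltn_divLR //; lia.
Qed.

Lemma spreading_ltM y : (spreading y < M) = spread_image y.
Proof.
rewrite /spreading /swap_along; case: (ltnP y M) => [yM | My].
  by rewrite small_spread_image // ltnNge /spread addnCA leq_addr.
by case: ifP => [/gather_lt -> | _] //; rewrite ltnNge My.
Qed.

Lemma spreading_small x : x < M -> spread_image (spreading x).
Proof. by move=> xM; rewrite /spreading /swap_along xM spread_imageP. Qed.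

Lemma spread_image_pair i b : i \in s -> b < M ->
  spread_image (i * E + (M + b)) = (b * K + index i s < M).
Proof.
move=> si bM; have /(pairE i) [divE modE] : M + b < E by lia.
by rewrite /spread_image gather_pair // divE modE leq_addr si.
Qed.

Lemma sum_spread_image i i' : i \in s -> i' \in s ->
  \sum_(j < E) (spread_image (i * E + j) && spread_image (i' * E + j)) =
  M %/ K + ((index i s < M %% K) && (index i' s < M %% K)).
Proof.
move=> si si'; rewrite big_split_ord /= big1 => [|j _]; last first.
  by rewrite spread_image_low.
have lt_max : maxn (index i s) (index i' s) < K by rewrite gtn_max !index_mem si si'.
rewrite add0n -gtn_max -(sum_mul_add_ltn M lt_max).
apply: eq_bigr => b _; rewrite !spread_image_pair //; congr nat_of_bool.
by apply/andP/idP; lia.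
Qed.

End Spreading.

Section LinearAlgebra.
Variable R : realType.
Local Notation C := R[i].
Local Open Scope classical_set_scope.

Lemma conjC_real_complex (x : R) : (x%:C%C : C)^* = x%:C%C.
Proof. exact: conjc_real. Qed.

Lemma adjE m n (A : 'M[C]_(m, n)) i j : adj A i j = (A j i)^*.
Proof. by rewrite !mxE. Qed.

Lemma adjM m n p (A : 'M[C]_(m, n)) (B : 'M[C]_(n, p)) :
  adj (A *m B) = adj B *m adj A.
Proof. by rewrite /adj map_mxM trmx_mul. Qed.

Lemma adj1 n : adj (1%:M : 'M[C]_n) = 1%:M.
Proof. by apply/matrixP => i j; rewrite adjE !mxE conjC_nat eq_sym. Qed.

Lemma unitary1 n : unitary (1%:M : 'M[C]_n).
Proof. by rewrite /unitary adj1 mul1mx. Qed.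

Lemma ketbraE d (v : 'cV[C]_d) i j : ketbra v i j = v i 0 * (v j 0)^*.
Proof. by rewrite !mxE big_ord1 adjE. Qed.

Lemma ketbra_conj m n (U : 'M[C]_(m, n)) (v : 'cV[C]_n) :
  U *m ketbra v *m adj U = ketbra (U *m v).
Proof. by rewrite /ketbra adjM !mulmxA. Qed.

Definition sqnorm d (v : 'cV[C]_d) : C := \sum_i v i 0 * (v i 0)^*.

Lemma sqnormE d (v : 'cV[C]_d) : sqnorm v = (adj v *m v) 0 0.
Proof. by rewrite mxE; apply: eq_bigr => i _; rewrite adjE mulrC. Qed.

Lemma sqnorm_unitary d (U : 'M[C]_d) (v : 'cV[C]_d) :
  unitary U -> sqnorm (U *m v) = sqnorm v.
Proof.
move=> /mulmx1C UU1; rewrite !sqnormE adjM -mulmxA (mulmxA (adj U)) UU1.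
by rewrite mul1mx.
Qed.

Lemma mxtrace_ketbra d (U : 'M[C]_d) (v : 'cV[C]_d) :
  \tr (U *m ketbra v) = \sum_i (U *m v) i 0 * (v i 0)^*.
Proof.
rewrite /ketbra mulmxA /mxtrace; apply: eq_bigr => i _.
by rewrite mxE big_ord1 adjE.
Qed.

(* Termwise [|w_i v_i| <= (|w_i|^2 + |v_i|^2) / 2] with [w = U v], and [U]
   preserves the norm. *)
Lemma norm_mxtrace_ketbra_le d (U : 'M[C]_d) (v : 'cV[C]_d) :
  unitary U -> `|\tr (U *m ketbra v)| <= sqnorm v.
Proof.
move=> Uu; rewrite mxtrace_ketbra; set w := U *m v.
apply: le_trans (ler_norm_sum _ _ _) _.
rewrite -(@ler_pMn2r _ 2) // -sumrMnl mulr2n -{1}(sqnorm_unitary v Uu).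
rewrite /sqnorm -big_split /=; apply: ler_sum => i _.
rewrite normrM norm_conjC -!normCK.
have : 0 <= (`|w i 0| - `|v i 0|) * (`|w i 0| - `|v i 0|)^* by exact: mul_conjC_ge0.
by rewrite rmorphB /= !conj_normC -expr2 sqrrB addrAC subr_ge0.
Qed.

Lemma trnorm_ge0 N (X : 'M[C]_N) : 0 <= trnorm X.
Proof.
rewrite /trnorm; set S := [set _ | _ in _].
have [S_sup|] := pselect (has_sup S); last by move/sup_out ->.
apply: le_trans (sup_upper_bound S_sup (ex_intro2 _ _ 1%:M (unitary1 N) erefl)).
by case: (\tr _) => a b; exact: sqrtr_ge0.
Qed.

Lemma trnorm_le N (X : 'M[C]_N) (B : R) :
  (forall U, unitary U -> `|\tr (U *m X)| <= B%:C%C) -> trnorm X <= B.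
Proof.
move=> XB; apply: ge_sup => [|_ [U Uu <-]]; last by rewrite -lecR; exact: XB.
by exists (Normc.normc (\tr (1%:M *m X))), 1%:M => //; exact: unitary1.
Qed.

Lemma trnorm_ketbraD_le d (a b : C) (v u : 'cV[C]_d) (B : R) :
  `|a| * sqnorm v + `|b| * sqnorm u <= B%:C%C ->
  trnorm (a *: ketbra v + b *: ketbra u) <= B.
Proof.
move=> abB; apply: trnorm_le => U Uu; apply: le_trans abB.
rewrite mulmxDr -!scalemxAr mxtraceD !mxtraceZ.
apply: le_trans (ler_normD _ _) _; rewrite !normrM.
by apply: lerD; apply: ler_wpM2l => //; exact: norm_mxtrace_ketbra_le.
Qed.

End LinearAlgebra.

Section Formation.
Variable R : realType.
Local Notation C := R[i].

Lemma expi_sqmod (t : R) : expi t * (expi t)^* = 1.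
Proof.
apply/eqP; rewrite eq_complex /=; apply/andP; split; apply/eqP.
- by rewrite mulrN opprK -!expr2 cos2Dsin2.
- by rewrite mulrN mulrC addNr.
Qed.

Lemma inv_sqrt_sqmod (n : nat) : (0 < n)%N ->
  let c : C := ((Num.sqrt (n%:R : R))^-1)%:C%C in c * c^* = n%:R^-1.
Proof.
move=> n_gt0 /=; rewrite conjC_real_complex -rmorphM /= -invfM -expr2.
by rewrite sqr_sqrtr ?ler0n // fmorphV /= rmorph_nat.
Qed.

Lemma unif_coh_sqmod d k (psi : 'cV[C]_d) : unif_coh k psi ->
  exists2 J : {set 'I_d}, #|J| = k &
    forall j, psi j 0 * (psi j 0)^* = if j \in J then k%:R^-1 else 0.
Proof.
case=> k_gt0 [J [theta [cardJ psiE]]]; exists J => // j; rewrite psiE.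
case: (j \in J); last by rewrite mul0r.
by rewrite rmorphM /= mulrACA expi_sqmod mulr1 inv_sqrt_sqmod.
Qed.

Definition supp d (v : 'cV[C]_d) := [set j | v j 0 != 0].

Lemma card_supp_unif_coh d k (psi : 'cV[C]_d) : unif_coh k psi -> #|supp psi| = k.
Proof.
move=> psik; have k_gt0 : (0 < k)%N by case: psik.
have [J cardJ psiJ] := unif_coh_sqmod psik; rewrite -cardJ; apply: eq_card => j.
rewrite inE -mul_conjC_eq0 psiJ.
by case: (j \in J); rewrite ?eqxx // invr_eq0 pnatr_eq0 -lt0n k_gt0.
Qed.

Lemma suppZ d (c : C) (v : 'cV[C]_d) : c != 0 -> supp (c *: v) = supp v.
Proof. by move=> c_nz; apply/setP => j; rewrite !inE mxE mulf_eq0 negb_or c_nz. Qed.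

Lemma unif_coh_scale d k k' (c : C) (psi : 'cV[C]_d) :
  unif_coh k psi -> unif_coh k' (c *: psi) -> k' = k.
Proof.
move=> psik cpsik'; have k'_gt0 : (0 < k')%N by case: cpsik'.
have [c0|c_nz] := eqVneq c 0.
  move: cpsik' k'_gt0; rewrite c0 scale0r => /card_supp_unif_coh <-.
  by rewrite eq_card0 // => j; rewrite !inE mxE eqxx.
by rewrite -(card_supp_unif_coh psik) -(card_supp_unif_coh cpsik') suppZ.
Qed.

Lemma ketbra_row_form d (w : 'rV[C]_d) (v : 'cV[C]_d) :
  (w *m ketbra v *m adj w) 0 0 = (w *m v) 0 0 * ((w *m v) 0 0)^*.
Proof. by rewrite ketbra_conj ketbraE. Qed.

Lemma ketbra_decomp_orth d L (p : 'I_L -> R) (phi : 'I_L -> 'cV[C]_d)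
    (psi : 'cV[C]_d) (w : 'rV[C]_d) :
  (forall a, 0 <= p a) -> ketbra psi = \sum_a (p a)%:C%C *: ketbra (phi a) ->
  (w *m psi) 0 0 = 0 -> forall a, p a != 0 -> (w *m phi a) 0 0 = 0.
Proof.
move=> p_ge0 psiE wpsi0 a pa_nz.
have := ketbra_row_form w psi; rewrite wpsi0 mul0r psiE mulmx_sumr mulmx_suml summxE.
under eq_bigr => b _ do rewrite -scalemxAr -scalemxAl mxE ketbra_row_form.
have term_ge0 b : 0 <= (p b)%:C%C * ((w *m phi b) 0 0 * ((w *m phi b) 0 0)^*).
  by rewrite mulr_ge0 ?ler0c ?mul_conjC_ge0.
move=> /(psumr_eq0P (fun b _ => term_ge0 b))/(_ a isT)/eqP.
rewrite mulf_eq0 mul_conjC_eq0 => /orP [/eqP /complexI pa0 | /eqP //].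
by rewrite pa0 eqxx in pa_nz.
Qed.

Lemma ketbra_decomp_parallel d L (p : 'I_L -> R) (phi : 'I_L -> 'cV[C]_d)
    (psi : 'cV[C]_d) (j0 : 'I_d) :
  psi j0 0 != 0 -> (forall a, 0 <= p a) ->
  ketbra psi = \sum_a (p a)%:C%C *: ketbra (phi a) ->
  forall a, p a != 0 -> phi a = (phi a j0 0 / psi j0 0) *: psi.
Proof.
move=> psij0 p_ge0 psiE a pa_nz; apply/matrixP => j l; rewrite ord1 mxE.
pose w : 'rV[C]_d := psi j0 0 *: delta_mx 0 j - psi j 0 *: delta_mx 0 j0.
have wE (v : 'cV[C]_d) : (w *m v) 0 0 = psi j0 0 * v j 0 - psi j 0 * v j0 0.
  by rewrite mulmxBl -!scalemxAl -!rowE !mxE.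
have := ketbra_decomp_orth (w := w) p_ge0 psiE.
rewrite wE mulrC subrr => /(_ erefl a pa_nz); rewrite wE => /eqP.
by rewrite subr_eq0 => /eqP phiE; apply: (mulfI psij0); rewrite phiE; field.
Qed.

Lemma C_f_U_unif_coh d k (psi : 'cV[C]_d) :
  unif_coh k psi -> C_f_U (ketbra psi) = (log2 (k%:R : R))%:E.
Proof.
move=> psik; apply/eqP; rewrite eq_le; apply/andP; split.
  apply: ereal_inf_lbound; exists 1%N, (fun => 1), (fun => k), (fun => psi).
  by rewrite !big_ord1 scale1r mul1r; split => //; split => //; exact: ler01.
apply/ereal_infP => _ [L [p [ks [phi [p_ge0 [p_sum1 [phik [psiE ->]]]]]]]].
have [j0] : exists j0, j0 \in supp psi.
  by apply/card_gt0P; rewrite (card_supp_unif_coh psik); case: psik.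
rewrite inE => psij0.
rewrite lee_fin -[X in X <= _]mul1r -p_sum1 mulr_suml; apply: ler_sum => a _.
have [->|pa_nz] := eqVneq (p a) 0; first by rewrite !mul0r.
move: (phik a); rewrite (ketbra_decomp_parallel psij0 p_ge0 psiE pa_nz).
by move/(unif_coh_scale psik) ->.
Qed.

End Formation.

Section FlatVectors.
Variable R : realType.
Local Notation C := R[i].

(* Unlike [unif_coh], this class is closed under tensor products without any
   bookkeeping of supports. *)
Definition flat D K (t : 'cV[C]_D) :=
  [/\ (0 < K)%N, forall j, t j 0 * (t j 0)^* = 0 \/ t j 0 * (t j 0)^* = K%:R^-1
    & sqnorm t = 1].

Lemma unif_coh_flat d k (psi : 'cV[C]_d) : unif_coh k psi -> flat k psi.
Proof.
move=> psik; have [k_gt0 _] := psik; have [J cardJ psiJ] := unif_coh_sqmod psik.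
split => // [j|]; first by rewrite psiJ; case: (j \in J); [right | left].
rewrite /sqnorm (eq_bigr _ (fun j _ => psiJ j)) -big_mkcond /= sumr_const cardJ.
by rewrite -[_ *+ k]mulr_natr mulVf // pnatr_eq0 -lt0n.
Qed.

Lemma flat_sqmod D K (t : 'cV[C]_D) : flat K t ->
  forall j, t j 0 * (t j 0)^* = if j \in supp t then K%:R^-1 else 0.
Proof.
case=> K_gt0 tK _ j; rewrite inE -mul_conjC_eq0.
by case: (tK j) => ->; rewrite ?eqxx // invr_eq0 pnatr_eq0 -lt0n K_gt0.
Qed.

Lemma card_supp_flat D K (t : 'cV[C]_D) : flat K t -> #|supp t| = K.
Proof.
move=> tK; have [K_gt0 _ t1] := tK.
have K_nz : K%:R != 0 :> C by rewrite pnatr_eq0 -lt0n.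
have : sqnorm t = #|supp t|%:R / K%:R.
  rewrite /sqnorm (eq_bigr _ (fun j _ => flat_sqmod tK j)) -big_mkcond /=.
  by rewrite sumr_const mulr_natl.
rewrite t1 => /(congr1 ( *%R^~ K%:R)); rewrite mul1r divfK //.
by move/eqP; rewrite eqr_nat eq_sym => /eqP.
Qed.

Lemma ketbra_tens D d (t : 'cV[C]_D) (v : 'cV[C]_d) :
  ketbra (t *t v : 'cV[C]_(D * d)) = ketbra t *t ketbra v.
Proof.
rewrite /ketbra -tensmx_mul; congr (_ *m _).
by apply/matrixP => i j; rewrite !mxE rmorphM.
Qed.

Lemma flat_tens D d K k (t : 'cV[C]_D) (v : 'cV[C]_d) :
  flat K t -> flat k v -> flat (K * k) (t *t v : 'cV[C]_(D * d)).
Proof.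
case=> K_gt0 tK t1 [k_gt0 vk v1]; split; first by rewrite muln_gt0 K_gt0.
- move=> x; rewrite !mxE !ord1 rmorphM /= mulrACA.
  case: (tK (mxtens_unindex x).1) => ->; first by left; rewrite mul0r.
  case: (vk (mxtens_unindex x).2) => ->; first by left; rewrite mulr0.
  by right; rewrite natrM invfM.
- rewrite -[1]mulr1 -{1}t1 -v1 /sqnorm mulr_sum; apply: eq_bigr => x _.
  by rewrite !mxE !ord1 rmorphM /= mulrACA.
Qed.

Lemma castmx_ketbra D D' (e : D = D') (t : 'cV[C]_D) :
  castmx (e, e) (ketbra t) = ketbra (castmx (e, erefl 1%N) t).
Proof. by case: D' / e; rewrite !castmx_id. Qed.

Lemma flat_castmx D D' K (e : D = D') (t : 'cV[C]_D) :
  flat K t -> flat K (castmx (e, erefl 1%N) t).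
Proof. by case: D' / e; rewrite castmx_id. Qed.

Lemma tpow_ketbra_flat d k (v : 'cV[C]_d) n : flat k v ->
  exists2 t : 'cV[C]_(d ^ n), flat (k ^ n) t & tpow (ketbra v) n = ketbra t.
Proof.
move=> vk; elim: n => [|n [t tk tE]].
  exists (const_mx 1); last first.
    apply/matrixP => i j; rewrite ketbraE !mxE conjC1 mulr1 (_ : i = j) ?eqxx //.
    have : (val i < 1)%N := ltn_ord i; have : (val j < 1)%N := ltn_ord j.
    by move=> j0 i0; apply/val_inj; lia.
  split=> // [j|]; first by right; rewrite mxE conjC1 mulr1 invr1.
  by rewrite /sqnorm big_ord1 mxE conjC1 mulr1.
exists (castmx (esym (expnSr d n), erefl 1%N) (t *t v : 'cV[C]_(d ^ n * d))).
  by rewrite [(k ^ _)%N]expnSr; apply/flat_castmx/flat_tens.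
by rewrite /= tE -ketbra_tens castmx_ketbra.
Qed.

End FlatVectors.

Section PureIncoherent.
Variable R : realType.
Local Notation C := R[i].

Definition embedv a N (v : 'cV[C]_a) : 'cV[C]_N :=
  \col_i match @insub _ (fun k => (k < a)%N) 'I_a (val i) with
         | Some i' => v i' 0 | None => 0 end.

Lemma embed_ketbra a N (v : 'cV[C]_a) : embed N (ketbra v) = ketbra (embedv N v).
Proof.
apply/matrixP => x y; rewrite ketbraE !mxE.
case: insubP => [i _ _|_]; case: insubP => [j _ _|_];
  by rewrite ?ketbraE ?mul0r ?conjC0 ?mulr0.
Qed.

Lemma embedv_max_coh N M x : embedv N (max_coh R M) x 0 =
  if (val x < M)%N then ((Num.sqrt (M%:R : R))^-1)%:C%C else 0.
Proof. by rewrite !mxE; case: insubP => [i -> _|/negbTE ->]; rewrite ?mxE. Qed.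

Lemma pio_fixed_conj N (U : 'M[C]_N) :
  incoh_unitary U -> pio_fixed (fun X => U *m X *m adj U).
Proof.
move=> Uinc; exists 1%N, 1%N, (fun => 1), (fun _ _ => U), (fun _ _ => [set: 'I_N]).
have projT : inc_proj R [set: 'I_N] = 1%:M.
  rewrite /inc_proj -diag_const_mx; congr diag_mx.
  by apply/matrixP => i j; rewrite !mxE inE.
split; first by move=> _; exact: ler01.
split; first by rewrite big_ord1.
split=> //; split=> [a|X]; first by rewrite big_ord1 projT.
by rewrite !big_ord1 projT !mulmx1 (_ : (1 : R)%:C%C = 1) // scale1r.
Qed.

Lemma PIO_conj_ptrace a b e (U : 'M[C]_(b * e)) :
  (a <= b * e)%N -> incoh_unitary U ->
  PIO (fun X : 'M[C]_a => ptrace (U *m embed (b * e) X *m adj U)).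
Proof.
move=> ab Uinc; exists e, (fun X => U *m X *m adj U).
by split; last split; [|exact: pio_fixed_conj|].
Qed.

Lemma perm_diag_mulmxE N (s : 'S_N) (v : 'rV[C]_N) (z : 'cV[C]_N) y :
  (perm_mx s *m diag_mx v *m z) y 0 = v 0 (s y) * z (s y) 0.
Proof. by rewrite -mulmxA -row_permE mxE mul_diag_mx mxE. Qed.

Lemma ptrace_ketbra b e (w : 'cV[C]_(b * e)) i i' :
  ptrace (ketbra w) i i' =
  \sum_j w (mxtens_index (i, j)) 0 * (w (mxtens_index (i', j)) 0)^*.
Proof. by rewrite mxE; apply: eq_bigr => j _; rewrite ketbraE. Qed.

End PureIncoherent.

Section Dilution.
Variable R : realType.
Local Notation C := R[i].
Variables (D K M : nat) (t : 'cV[C]_D).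
Hypotheses (tK : flat K t) (M_gt0 : (0 < M)%N).

Local Notation E := (M + M)%N.
Local Notation N := (D * (M + M))%N.
Local Notation S := (supp t).
Let s := [seq val i | i <- enum S].

Let K_gt0 : (0 < K)%N. Proof. by case: tK. Qed.
Let s_uniq : uniq s. Proof. by rewrite map_inj_uniq ?enum_uniq //; exact: val_inj. Qed.
Let size_s : size s = K. Proof. by rewrite size_map -(card_supp_flat tK) cardE. Qed.
Let s_gt0 : (0 < size s)%N. Proof. by rewrite size_s. Qed.
Let s_lt : all (fun i => i < D)%N s.
Proof. by apply/allP => _ /mapP [i _ ->]; exact: ltn_ord. Qed.
Let mem_s (i : 'I_D) : (val i \in s) = (i \in S).
Proof. by rewrite mem_map ?mem_enum //; exact: val_inj. Qed.

Let t_out (i : 'I_D) : i \notin S -> t i 0 = 0.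
Proof. by rewrite inE negbK => /eqP. Qed.

Definition spreading_ord (x : 'I_N) : 'I_N := insubd x (spreading s M x).

Let spreading_ordE x : val (spreading_ord x) = spreading s M x.
Proof. by rewrite val_insubd (spreading_lt s_uniq s_gt0 s_lt) ?ltn_ord. Qed.

Let spreading_ordK : involutive spreading_ord.
Proof. by move=> x; apply: val_inj; rewrite !spreading_ordE spreadingK. Qed.

Definition spreading_perm : 'S_N := perm (inv_inj spreading_ordK).

Let spreading_permE x : val (spreading_perm x) = spreading s M x.
Proof. by rewrite permE spreading_ordE. Qed.

Let spreading_permK x : spreading_perm (spreading_perm x) = x.
Proof. by rewrite !permE spreading_ordK. Qed.

Let sK : C := (Num.sqrt (K%:R : R))%:C%C.
Let cM : C := ((Num.sqrt (M%:R : R))^-1)%:C%C.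

Let sK_sqmod : sK * sK^* = K%:R.
Proof.
by rewrite conjC_real_complex -rmorphM /= -expr2 sqr_sqrtr ?ler0n // rmorph_nat.
Qed.

(* At a source index [x < M] the phase is that of [t] on the row to which
   [spreading_perm] sends [x], so the rotated state carries the phases of [t]. *)
Definition spreading_phase : 'rV[C]_N :=
  \row_x (if (val x < M)%N then sK * t (mxtens_unindex (spreading_perm x)).1 0 else 1).

Let spreading_phase_sqmod x : spreading_phase 0 x * (spreading_phase 0 x)^* = 1.
Proof.
rewrite mxE; case: ifP => xM; last by rewrite conjC1 mulr1.
have rowS : (mxtens_unindex (spreading_perm x)).1 \in S.
  by rewrite -mem_s /= spreading_permE; case/and3P: (spreading_small s_uniq s_gt0 xM).
by rewrite rmorphM mulrACA sK_sqmod (flat_sqmod tK) rowS mulfV // pnatr_eq0 -lt0n.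
Qed.

Definition spreading_unitary : 'M[C]_N :=
  perm_mx spreading_perm *m diag_mx spreading_phase.

Definition dilution_map (X : 'M[C]_M) : 'M[C]_D :=
  ptrace (spreading_unitary *m embed N X *m adj spreading_unitary).

Lemma dilution_map_PIO : PIO dilution_map.
Proof.
apply: PIO_conj_ptrace.
  have /(leq_trans K_gt0) D_gt0 : (K <= D)%N.
    by have := max_card S; rewrite card_ord (card_supp_flat tK).
  by rewrite (leq_trans (leq_addr M M)) // leq_pmull.
by exists spreading_perm, spreading_phase; split=> //; exact: spreading_phase_sqmod.
Qed.

Let spread_vecE (i : 'I_D) (j : 'I_E) :
  (spreading_unitary *m embedv N (max_coh R M)) (mxtens_index (i, j)) 0 =
  if spread_image s M (i * E + j) then sK * cM * t i 0 else 0.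
Proof.
rewrite perm_diag_mulmxE embedv_max_coh mxE spreading_permK mxtens_indexK.
rewrite spreading_permE /=.
by rewrite spreading_ltM //; case: ifP; rewrite ?mulr0 // mulrAC.
Qed.

Let dilution_max_cohE (i i' : 'I_D) :
  dilution_map (ketbra (max_coh R M)) i i' = K%:R / M%:R * (t i 0 * (t i' 0)^*) *
    (M %/ K + ((index (val i) s < M %% K) && (index (val i') s < M %% K)))%N%:R.
Proof.
rewrite /dilution_map embed_ketbra ketbra_conj ptrace_ketbra.
have ifM b b' (x y : C) :
  (if b then x else 0) * (if b' then y else 0)^* = (b && b')%:R * (x * y^*).
  by case: b; case: b'; rewrite ?conjC0 ?mul0r ?mulr0 ?mul1r.
under eq_bigr => j _ do rewrite !spread_vecE ifM.
rewrite -mulr_suml -natr_sum mulrC !rmorphM /= mulrACA (mulrACA sK) sK_sqmod.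
rewrite inv_sqrt_sqmod //.
have [iS|/t_out ->] := boolP (i \in S); last by rewrite !(mul0r, mulr0).
have [i'S|/t_out ->] := boolP (i' \in S); last by rewrite !(conjC0, mul0r, mulr0).
by rewrite sum_spread_image ?mem_s // size_s.
Qed.

Definition remainder_part : 'cV[C]_D :=
  \col_j ((index (val j) s < M %% K)%N%:R * t j 0).

Lemma dilution_max_coh : dilution_map (ketbra (max_coh R M)) =
  (1 - (M %% K)%:R / M%:R) *: ketbra t + K%:R / M%:R *: ketbra remainder_part.
Proof.
have M_nz : M%:R != 0 :> C by rewrite pnatr_eq0 -lt0n.
have ME : M%:R = (M %/ K)%:R * K%:R + (M %% K)%:R :> C by rewrite -natrM -natrD -divn_eq.
apply/matrixP => i i'; rewrite dilution_max_cohE [RHS]mxE.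
rewrite [X in _ = X + _]mxE [X in _ = _ + X]mxE !ketbraE !mxE.
rewrite natrD -mulnb natrM !rmorphM /= !conjC_nat.
by move: M_nz; rewrite ME => M_nz; field.
Qed.

Lemma dilution_error :
  trnorm (dilution_map (ketbra (max_coh R M)) - ketbra t) <= 2 * K%:R / M%:R.
Proof.
have [_ _ t1] := tK; set r := (M %% K)%N.
have a_ge0 : 0 <= r%:R / M%:R :> C by rewrite divr_ge0 ?ler0n.
have b_ge0 : 0 <= K%:R / M%:R :> C by rewrite divr_ge0 ?ler0n.
have u_le1 : sqnorm remainder_part <= 1.
  rewrite -t1; apply: ler_sum => j _; rewrite mxE rmorphM /= mulrACA conjC_nat.
  by case: (_ < _)%N; rewrite ?mul1r ?mul0r ?mul_conjC_ge0.
rewrite dilution_max_coh scalerBl scale1r addrAC (addrC (ketbra t)) addrK -scaleNr.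
apply: trnorm_ketbraD_le; rewrite normrN !ger0_norm // t1 mulr1.
apply: le_trans (lerD (lexx _) (ler_wpM2l b_ge0 u_le1)) _.
rewrite mulr1 -mulrDl !rmorphM /= fmorphV /= !rmorph_nat mulr_natl mulr2n.
by rewrite ler_pM2r ?invr_gt0 ?ltr0n // lerD2r ler_nat ltnW // ltn_mod.
Qed.

Lemma dilution_flat : exists2 Lam : 'M[C]_M -> 'M[C]_D, PIO Lam &
  trnorm (Lam (ketbra (max_coh R M)) - ketbra t) <= 2 * K%:R / M%:R.
Proof. by exists dilution_map; [exact: dilution_map_PIO | exact: dilution_error]. Qed.

End Dilution.

Section Cost.
Variable R : realType.
Local Notation C := R[i].
Local Open Scope classical_set_scope.

Lemma dil_err_ge0 d (rho : 'M[C]_d) r n : 0 <= dil_err rho r n.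
Proof.
rewrite /dil_err; set S := [set _ | _ in _].
have [[S0 _]|/inf_out ->] := pselect (has_inf S); last by [].
by apply: lb_le_inf => // _ [Lam _ <-]; exact: trnorm_ge0.
Qed.

Lemma dil_err_le d (rho : 'M[C]_d) r n Lam B : PIO Lam ->
  trnorm (Lam (ketbra (max_coh R (2 ^ nbits r n))) - tpow rho n) <= B ->
  dil_err rho r n <= B.
Proof.
move=> Lam_PIO LamB; apply: le_trans LamB; apply: ge_inf; last by exists Lam.
by exists 0 => _ [Lam' _ <-]; exact: trnorm_ge0.
Qed.

Lemma dilution_rate_bound (k : nat) (r : R) n : (0 < k)%N -> 0 <= r ->
  2 * (k ^ n)%:R / (2 ^ nbits r n)%:R <= 4 * expR (ln k%:R - r * ln 2) ^+ n.
Proof.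
move=> k_gt0 r_ge0; set L := ln (2 : R); set lk := ln (k%:R : R).
have L_gt0 : 0 < L by apply: ln_gt0; rewrite ltr1n.
have kE : k%:R = expR lk by rewrite /lk lnK // posrE ltr0n.
have twoE : 2 = expR L by rewrite /L lnK // posrE ltr0n.
have nbits_ge : r * n%:R - 1 <= (nbits r n)%:R.
  rewrite /nbits natr_absz ger0_norm ?floor_ge0 ?mulr_ge0 //.
  by rewrite lerBlDr ltW // -intrD1 floorD1_gt.
rewrite !natrX kE [in X in _ / X]twoE -!expRM_natr -mulrA -expRB.
rewrite [X in _ <= X * _](_ : 4 = 2 * expR L); last by rewrite -twoE -natrM.
rewrite -mulrA ler_pM2l ?ltr0n // -expRD ler_expR.
have := ler_wpM2l (ltW L_gt0) nbits_ge; rewrite mulrBr mulr1 => nbitsL.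
by rewrite mulrBl; lra.
Qed.

Lemma log2_nat_ge0 (k : nat) : (0 < k)%N -> 0 <= log2 (k%:R : R).
Proof. by move=> k_gt0; rewrite divr_ge0 ?ln_ge0 ?ler1n // ltW // ln_gt0 // ltr1n. Qed.

Lemma C_c_PIO_le d (rho : 'M[C]_d) (c : R) : 0 <= c ->
  (forall r, c < r -> dil_err rho r n @[n --> \oo] --> 0) ->
  (C_c_PIO rho <= c%:E)%E.
Proof.
move=> c_ge0 err_cvg; apply/lee_addgt0Pr => e e_gt0.
apply: ge_ereal_inf; exists (c + e)%:E => //; exists (c + e) => //.
by split; [rewrite addr_ge0 // ltW | apply: err_cvg; rewrite ltrDl].
Qed.

Lemma dil_err_unif_coh_cvg d k (psi : 'cV[C]_d) (r : R) :
  unif_coh k psi -> log2 k%:R < r -> dil_err (ketbra psi) r n @[n --> \oo] --> 0.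
Proof.
move=> psik kr; have k_gt0 : (0 < k)%N by case: psik.
have ln2_gt0 : 0 < ln (2 : R) by apply: ln_gt0; rewrite ltr1n.
have r_gt0 : 0 < r := le_lt_trans (log2_nat_ge0 k_gt0) kr.
set z := expR (ln k%:R - r * ln 2).
have z_lt1 : `|z| < 1.
  by rewrite ger0_norm ?expR_ge0 // expR_lt1 subr_lt0 -ltr_pdivrMr.
apply: (@squeeze_cvgr _ _ _ _ (fun n => 0 * z ^+ n) (fun n => 4 * z ^+ n)).
- apply: nearW => n; rewrite mul0r dil_err_ge0 /=.
  have [t tk tE] := tpow_ketbra_flat n (unif_coh_flat psik).
  have [Lam Lam_PIO LamB] := dilution_flat tk (expn_gt0 2 (nbits r n)).
  apply: le_trans (dil_err_le Lam_PIO _) (dilution_rate_bound n k_gt0 (ltW r_gt0)).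
  by rewrite tE.
- exact: cvg_geometric.
- exact: cvg_geometric.
Qed.

End Cost.

Unset Implicit Arguments.

Theorem lemma14 (R : realType) (d k : nat) (psi : 'cV[R[i]]_d) :
  unif_coh k psi ->
  (C_c_PIO (ketbra psi) <= (log2 (k%:R : R))%:E)%E /\
  C_f_U (ketbra psi) = (log2 (k%:R : R))%:E.
Proof.
move=> psik; split; last exact: C_f_U_unif_coh.
have [k_gt0 _] := psik.
apply: C_c_PIO_le => [|r]; first exact: log2_nat_ge0.
exact: dil_err_unif_coh_cvg.
Qed.
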